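(* Let $(S,V)$ be a complete semiring-semimodule pair, let $n\ge1$, let $\Gamma$ be an alphabet, and let $M\in (S^{n\times n})^{\Gamma^*\times\Gamma^*}$ be a pushdown transition matrix. Then for all $p\in\Gamma$ and $0\le l\le n$, $$(M^{\omega,l})_p=\sum_{p'\in\Gamma}(A_M)_{p,p'}\,(M^{\omega,l})_{p'}.$$
   Context: A complete semiring-semimodule pair $(S,V)$ (in the sense of Ésik and Kuich, ''Modern Automata Theory'') consists of a complete starsemiring $S$ (arbitrary sums with infinite associativity/commutativity/distributivity laws, star $s^*=\sum_{j\ge0}s^j$) and a complete $S$-semimodule $V$, with infinite products $\prod_{j\ge1}s_j\in V$ of sequences in $S$ satisfying the axioms of that framework. $M\in (S^{n\times n})^{\Gamma^*\times\Gamma^*}$ (a $\Gamma^*\times\Gamma^*$ matrix with $n\times n$ blocks over $S$) is a pushdown transition matrix if (i) for each $p\in\Gamma$ only finitely many blocks $M_{p,\pi}$ are nonzero, and (ii) $M_{\pi_1,\pi_2}=M_{p,\pi}$ if $\pi_1=p\pi'$, $\pi_2=\pi\pi'$ for some $p\in\Gamma$, $\pi,\pi'\in\Gamma^*$, and $0$ otherwise. $M^*=\sum_{m\ge0}M^m$ with blocks $(M^* )_{\pi,\pi'}$. Let $P_l=\{(j_1,j_2,\dots)\in\{1,\dots,n\}^\omega\mid j_t\le l\text{ for infinitely many }t\}$; $M^{\omega,l}\in (V^n)^{\Gamma^*}$ is given by $((M^{\omega,l})_\pi)_i=\sum_{\pi_1,\pi_2,\ldots\in\Gamma^*}\sum_{(j_1,j_2,\ldots)\in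 P_l}(M_{\pi,\pi_1})_{i,j_1}(M_{\pi_1,\pi_2})_{j_1,j_2}\cdots$ (sum of weights of infinite paths from $(\pi,i)$ visiting states $\le l$ infinitely often). For $p,p'\in\Gamma$, $$(A_M)_{p,p'}=\sum_{\substack{\pi=p_1\dots p_k\in\Gamma^+,\ 1\le j\le k\\ p_j=p'}}M_{p,\pi}\,(M^* )_{p_1,\epsilon}\cdots(M^* )_{p_{j-1},\epsilon}\in S^{n\times n}.$$ *)

From mathcomp Require Import all_boot.

Set Implicit Arguments.
Unset Strict Implicit.
Unset Printing Implicit Defensive.

(* Complete semiring: a semiring with sums csum I f of arbitrary families
   f : I -> S, satisfying the Esik--Kuich axioms: empty/one/two element
   sums, infinite associativity/commutativity (partition axiom, here
   phrased via an arbitrary map g : I -> J whose fibres form the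
   partition), and infinite distributivity on both sides. *)
Record CSemiring (S : Type) := {
  szero : S; sone : S;
  sadd : S -> S -> S; smul : S -> S -> S;
  csum : forall I : Type, (I -> S) -> S;
  saddA : forall a b c, sadd a (sadd b c) = sadd (sadd a b) c;
  saddC : forall a b, sadd a b = sadd b a;
  sadd0 : forall a, sadd szero a = a;
  smulA : forall a b c, smul a (smul b c) = smul (smul a b) c;
  smul1l : forall a, smul sone a = a;
  smul1r : forall a, smul a sone = a;
  smulDl : forall a b c, smul (sadd a b) c = sadd (smul a c) (smul b c);
  smulDr : forall a b c, smul a (sadd b c) = sadd (smul a b) (smul a c);
  smul0l : forall a, smul szero a = szero;
  smul0r : forall a, smul a szero = szero;
  csum_empty : forall (I : Type) (f : I -> S), (I -> False) -> csum f = szero;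
  csum_single : forall (I : Type) (f : I -> S) (i0 : I),
      (forall i, i = i0) -> csum f = f i0;
  csum_pair : forall f : bool -> S, csum f = sadd (f true) (f false);
  csum_partition : forall (I J : Type) (g : I -> J) (f : I -> S),
      csum f = csum (fun j : J => csum (fun x : {i : I | g i = j} => f (sval x)));
  csum_mull : forall a (I : Type) (f : I -> S),
      smul a (csum f) = csum (fun i => smul a (f i));
  csum_mulr : forall a (I : Type) (f : I -> S),
      smul (csum f) a = csum (fun i => smul (f i) a)
}.

Definition sprod S (cs : CSemiring S) (l : seq S) : S :=
  foldr (smul cs) (sone cs) l.

(* Complete S-semimodule V together with infinite products
   iprod s = prod_{j>=1} s_j in V (our sequences are indexed from 0),
   with the three Esik--Kuich axioms for infinite products. *)
Record CSemimodule S (cs : CSemiring S) (V : Type) := {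
  vzero : V;
  vadd : V -> V -> V;
  act : S -> V -> V;
  vsum : forall I : Type, (I -> V) -> V;
  iprod : (nat -> S) -> V;
  vaddA : forall a b c, vadd a (vadd b c) = vadd (vadd a b) c;
  vaddC : forall a b, vadd a b = vadd b a;
  vadd0 : forall a, vadd vzero a = a;
  actDl : forall s t v, act (sadd cs s t) v = vadd (act s v) (act t v);
  actDr : forall s v w, act s (vadd v w) = vadd (act s v) (act s w);
  actA : forall s t v, act (smul cs s t) v = act s (act t v);
  act1 : forall v, act (sone cs) v = v;
  act0l : forall v, act (szero cs) v = vzero;
  act0r : forall s, act s vzero = vzero;
  vsum_empty : forall (I : Type) (f : I -> V), (I -> False) -> vsum f = vzero;
  vsum_single : forall (I : Type) (f : I -> V) (i0 : I),
      (forall i, i = i0) -> vsum f = f i0;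
  vsum_pair : forall f : bool -> V, vsum f = vadd (f true) (f false);
  vsum_partition : forall (I J : Type) (g : I -> J) (f : I -> V),
      vsum f = vsum (fun j : J => vsum (fun x : {i : I | g i = j} => f (sval x)));
  vsum_actl : forall s (I : Type) (f : I -> V),
      act s (vsum f) = vsum (fun i => act s (f i));
  vsum_actr : forall v (I : Type) (f : I -> S),
      act (csum cs f) v = vsum (fun i => act (f i) v);
  iprod_shift : forall s : nat -> S,
      iprod s = act (s 0) (iprod (fun j => s j.+1));
  iprod_group : forall (s : nat -> S) (k : nat -> nat),
      k 0 = 0 -> (forall j, k j < k j.+1) ->
      iprod s = iprod (fun j => sprod cs (map s (iota (k j) (k j.+1 - k j))));
  iprod_sum : forall (I : nat -> Type) (f : forall j, I j -> S),
      iprod (fun j => csum cs (f j)) =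
      vsum (fun c : (forall j, I j) => iprod (fun j => f j (c j)))
}.

(* n x n matrices over S (states are 'I_n, i.e. 0..n-1 for 1..n). *)
Definition mx (S : Type) (n : nat) := 'I_n -> 'I_n -> S.

Section Matrices.
Variables (S : Type) (cs : CSemiring S) (n : nat).

Definition mx0 : mx S n := fun _ _ => szero cs.
Definition mx1 : mx S n := fun i j => if i == j then sone cs else szero cs.
Definition mxmul (A B : mx S n) : mx S n :=
  fun i j => csum cs (fun k : 'I_n => smul cs (A i k) (B k j)).

Variable (Γ : finType).

Definition pushdown_transition (M : seq Γ -> seq Γ -> mx S n) : Prop :=
  (forall p : Γ, exists s : seq (seq Γ),
      forall π, π \notin s -> forall i j, M [:: p] π i j = szero cs) /\
  (forall (p : Γ) (π π' : seq Γ), M (p :: π') (π ++ π') = M [:: p] π) /\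
  (forall π1 π2 : seq Γ,
      ~ (exists (p : Γ) (π π' : seq Γ), π1 = p :: π' /\ π2 = π ++ π') ->
      forall i j, M π1 π2 i j = szero cs).

Variable (M : seq Γ -> seq Γ -> mx S n).

Fixpoint Mpow (m : nat) : seq Γ -> seq Γ -> mx S n :=
  match m with
  | 0 => fun π π' => if π == π' then mx1 else mx0
  | m'.+1 => fun π π' i j =>
      csum cs (fun π'' : seq Γ => mxmul (M π π'') (Mpow m' π'' π') i j)
  end.

Definition Mstar (π π' : seq Γ) : mx S n :=
  fun i j => csum cs (fun m : nat => Mpow m π π' i j).

(* (A_M)_{p,p'} = sum over π = p_1..p_k in Γ^+, 1 <= j <= k, p_j = p' of
   M_{p,π} (Mstar)_{p_1,ε} ... (Mstar)_{p_{j-1},ε}; here j is 0-based (x.2). *)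
Definition A_M (p p' : Γ) : mx S n :=
  fun i j =>
    csum cs (fun x : {x : seq Γ * nat | (x.2 < size x.1) && (nth p x.1 x.2 == p')} =>
      foldl mxmul (M [:: p] (sval x).1)
            (map (fun q => Mstar [:: q] [::]) (take (sval x).2 (sval x).1)) i j).

(* P_l : state sequences visiting a state in {1..l} (0-based: < l)
   infinitely often *)
Definition P_l (l : nat) (js : nat -> 'I_n) : Prop :=
  forall N, exists t, N <= t /\ js t < l.

Variables (V : Type) (cv : CSemimodule cs V).

Definition Momega (l : nat) (π : seq Γ) : 'I_n -> V :=
  fun i =>
    vsum cv (fun ps : nat -> seq Γ =>
      vsum cv (fun js : {js : nat -> 'I_n | P_l l js} =>
        iprod cv (fun t =>
          M (if t is t'.+1 then ps t' else π) (ps t)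
            (if t is t'.+1 then sval js t' else i) (sval js t)))).

Definition mxvec (A : mx S n) (v : 'I_n -> V) : 'I_n -> V :=
  fun i => vsum cv (fun k : 'I_n => act cv (A i k) (v k)).

End Matrices.

From mathcomp Require Import all_boot boolp.

(* Cut every path from [p] after its first step p -> π.  For a nonempty word
   π and any σ, a path from πσ either keeps its stack strictly above σ
   forever, and is then a path from π with σ appended, or it comes down to
   height |σ| for a first time after m+1 steps, necessarily onto σ itself;
   summing over these prefixes gives (M^{m+1})_{π,ε} (M^{ω,l})_σ.  Hence
     (M^{ω,l})_{πσ} = (M^{ω,l})_π + M*_{π,ε} (M^{ω,l})_σ,
   and iterating along π = p_1 ... p_k and regrouping by the letter p_j whose
   path never comes back gives the equation.  Sums over the paths with some
   property are written as masked sums over all paths ([vmask]), so that the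
   axioms of complete sums split, partition and reindex them. *)

Set Implicit Arguments.
Unset Strict Implicit.
Unset Printing Implicit Defensive.

Section CompleteSums.
Variables (S : Type) (cs : CSemiring S) (V : Type) (cv : CSemimodule cs V).
Local Notation vs := (vsum cv).

Lemma eq_vsum (I : Type) (f g : I -> V) : f =1 g -> vs f = vs g.
Proof. by move=> /funext ->. Qed.

Lemma vsum_eq0 (I : Type) (f : I -> V) :
  (forall i, f i = vzero cv) -> vs f = vzero cv.
Proof.
move=> f0; rewrite (@eq_vsum _ f (fun _ => act cv (szero cs) (vzero cv))).
  by rewrite -vsum_actl act0l.
by move=> i; rewrite f0 act0l.
Qed.

Lemma reindex_vsum (I J : Type) (h : I -> J) (f : J -> V) :
  bijective h -> vs f = vs (fun i => f (h i)).
Proof.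
case=> h' hK h'K; rewrite (vsum_partition cv h); apply: eq_vsum => j.
rewrite (@vsum_single _ _ _ cv _ _ (exist (fun i => h i = j) (h' j) (h'K j))) /= ?h'K //.
by move=> [i e]; apply: eq_exist; rewrite -e hK.
Qed.

Lemma vsum_prod (I J : Type) (f : I * J -> V) :
  vs f = vs (fun i => vs (fun j => f (i, j))).
Proof.
rewrite (vsum_partition cv fst); apply: eq_vsum => i.
have pairK : bijective (fun j => exist (fun x : I * J => x.1 = i) (i, j) erefl).
  by exists (fun x => (sval x).2) => // -[[i' j] /= e]; apply: eq_exist; rewrite e.
by rewrite (reindex_vsum _ pairK).
Qed.

Lemma exchange_vsum (I J : Type) (f : I -> J -> V) :
  vs (fun i => vs (fun j => f i j)) = vs (fun j => vs (fun i => f i j)).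
Proof.
have swapK : bijective (fun x : J * I => (x.2, x.1)).
  by exists (fun x => (x.2, x.1)) => -[].
by rewrite -(vsum_prod (fun x => f x.1 x.2)) (reindex_vsum _ swapK) vsum_prod.
Qed.

Lemma vsumD (I : Type) (f g : I -> V) :
  vs (fun i => vadd cv (f i) (g i)) = vadd cv (vs f) (vs g).
Proof.
rewrite (@eq_vsum _ _ (fun i => vs (fun b : bool => if b then f i else g i))).
  by rewrite exchange_vsum vsum_pair.
by move=> i; rewrite vsum_pair.
Qed.

Definition vmask (P : Prop) (v : V) : V := if pselect P then v else vzero cv.

Lemma vmaskT (P : Prop) v : P -> vmask P v = v.
Proof. by rewrite /vmask; case: pselect. Qed.

Lemma vmaskF (P : Prop) v : ~ P -> vmask P v = vzero cv.
Proof. by rewrite /vmask; case: pselect. Qed.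

Lemma vmask0 (P : Prop) : vmask P (vzero cv) = vzero cv.
Proof. by rewrite /vmask; case: pselect. Qed.

Lemma vmask_act (P : Prop) s v : act cv s (vmask P v) = vmask P (act cv s v).
Proof. by rewrite /vmask; case: (pselect P) => _ /=; rewrite ?act0r. Qed.

Lemma vmask_split (P : Prop) v : v = vadd cv (vmask P v) (vmask (~ P) v).
Proof.
have [p|np] := pselect P.
  by rewrite vmaskT // vmaskF // vaddC vadd0.
by rewrite vmaskF // vmaskT // vadd0.
Qed.

Lemma vsum_sig (I : Type) (P : I -> Prop) (f : I -> V) :
  vs (fun x : {i | P i} => f (sval x)) = vs (fun i => vmask (P i) (f i)).
Proof.
rewrite [RHS](vsum_partition cv (fun i => `[< P i >])) vsum_pair.
rewrite [X in vadd cv _ X]vsum_eq0 => [|[i /= /asboolPn Pi]]; last exact: vmaskF.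
rewrite vaddC vadd0; have -> : (fun i => `[< P i >] = true) = P.
  by apply/funext => i; apply/propext; split => /asboolP.
by apply: eq_vsum => -[i Pi]; rewrite vmaskT.
Qed.

Lemma vsum_supp1 (I : Type) (i0 : I) (f : I -> V) :
  (forall i, i <> i0 -> f i = vzero cv) -> vs f = f i0.
Proof.
move=> f0; rewrite (@eq_vsum _ _ (fun i => vmask (i = i0) (f i))); last first.
  by move=> i; have [->|/[dup] /f0 -> /vmaskF ->] := pselect (i = i0); rewrite ?vmaskT.
rewrite -vsum_sig (@vsum_single _ _ _ cv _ _ (exist (fun i => i = i0) i0 erefl)) //.
by move=> [i e]; apply: eq_exist.
Qed.

Lemma reindex_vsum_inj (I J : Type) (h : I -> J) (f : J -> V) :
  injective h -> (forall j, (forall i, h i <> j) -> f j = vzero cv) ->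
  vs f = vs (fun i => f (h i)).
Proof.
move=> h_inj f0.
rewrite (@eq_vsum _ _ (fun j => vmask (exists i, h i = j) (f j))); last first.
  move=> j; have [/vmaskT -> //|nj] := pselect (exists i, h i = j).
  by rewrite vmaskF // f0 // => i hij; apply: nj; exists i.
rewrite -vsum_sig.
have hK : bijective
    (fun i => exist (fun j => exists i, h i = j) (h i) (ex_intro _ i erefl)).
  exists (fun y : {j | exists i, h i = j} => sval (cid (proj2_sig y))) => [i|[j Pj]].
    by case: (cid _) => /= i' /h_inj.
  by apply: eq_exist; case: (cid _).
by rewrite (reindex_vsum _ hK).
Qed.

Lemma vsum_nat (f : nat -> V) : vs f = vadd cv (f 0%N) (vs (fun m => f m.+1)).
Proof.
rewrite (eq_vsum (fun m => vmask_split (m = 0%N) (f m))) vsumD; congr vadd.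
  by rewrite (vsum_supp1 (i0 := 0%N)) ?vmaskT // => m /vmaskF.
rewrite (@reindex_vsum_inj _ _ succn) => [||[_|m m0]].
- by apply: eq_vsum => m; rewrite vmaskT.
- exact: succn_inj.
- exact: vmaskF.
- by case: (m0 m).
Qed.

Lemma iprod_eq0 (s : nat -> S) t : s t = szero cs -> iprod cv s = vzero cv.
Proof.
elim: t s => [|t IH] s st; rewrite iprod_shift; first by rewrite st act0l.
by rewrite (IH (fun j => s j.+1)) // act0r.
Qed.

End CompleteSums.

Section MatrixAction.
Variables (S : Type) (cs : CSemiring S) (V : Type) (cv : CSemimodule cs V) (n : nat).
Local Notation vs := (vsum cv).
Local Notation vec := ('I_n -> V).

Lemma mxvec_zero (A : mx S n) : mxvec cv A (fun _ => vzero cv) = fun _ => vzero cv.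
Proof. by apply/funext => i; apply: vsum_eq0 => k; rewrite act0r. Qed.

Lemma mxvec_mx0 (v : vec) : mxvec cv (@mx0 _ cs n) v = fun _ => vzero cv.
Proof. by apply/funext => i; apply: vsum_eq0 => k; rewrite act0l. Qed.

Lemma mxvec_mx1 (v : vec) : mxvec cv (@mx1 _ cs n) v = v.
Proof.
apply/funext => i; rewrite /mxvec (vsum_supp1 (i0 := i)) /mx1 ?eqxx ?act1 // => k.
by move/eqP; rewrite eq_sym => /negbTE ->; rewrite act0l.
Qed.

Lemma mxvec_vsum (A : mx S n) (J : Type) (f : J -> vec) :
  mxvec cv A (fun k => vs (fun j => f j k)) =
  fun i => vs (fun j => mxvec cv A (f j) i).
Proof.
apply/funext => i; rewrite /mxvec -exchange_vsum.
by apply: eq_vsum => k; rewrite vsum_actl.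
Qed.

Lemma mxvec_mul (A B : mx S n) (v : vec) :
  mxvec cv (mxmul cs A B) v = mxvec cv A (mxvec cv B v).
Proof.
apply/funext => i.
rewrite /mxvec /mxmul (eq_vsum cv (fun k => vsum_actr cv _ _)) exchange_vsum.
by apply: eq_vsum => k; rewrite vsum_actl; apply: eq_vsum => k'; rewrite actA.
Qed.

Lemma mxvec_foldl (A : mx S n) (Bs : seq (mx S n)) (v : vec) :
  mxvec cv (foldl (@mxmul _ cs n) A Bs) v = mxvec cv A (foldr (mxvec cv) v Bs).
Proof. by elim: Bs A => [|B Bs IH] A //=; rewrite IH mxvec_mul. Qed.

End MatrixAction.

Definition scons (A : Type) (a : A) (f : nat -> A) : nat -> A :=
  fun t => if t is t'.+1 then f t' else a.
Definition stail (A : Type) (f : nat -> A) : nat -> A := fun t => f t.+1.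

Lemma scons_tail (A : Type) (f : nat -> A) : scons (f 0) (stail f) = f.
Proof. by apply/funext => -[]. Qed.

Lemma P_l_scons n l (k : 'I_n) (js : nat -> 'I_n) : P_l l (scons k js) <-> P_l l js.
Proof.
split=> js_l N.
  by have [[|t] [/= Nt jt]] := js_l N.+1; last by exists t.
by have [t [Nt jt]] := js_l N; exists t.+1; split => //; apply: leqW.
Qed.

Lemma catIs (T : Type) (σ : seq T) : injective (cat^~ σ).
Proof.
apply: (can_inj (g := fun s => take (size s - size σ) s)) => ρ.
by rewrite size_cat addnK take_size_cat.
Qed.

Section Pushdown.
Variables (S : Type) (cs : CSemiring S) (V : Type) (cv : CSemimodule cs V).
Variables (n : nat) (Γ : finType) (M : seq Γ -> seq Γ -> mx S n).
Local Notation vs := (vsum cv).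
Local Notation Mpow := (Mpow cs M).

Lemma mxvec_Mpow0 (π π' : seq Γ) (v : 'I_n -> V) :
  mxvec cv (Mpow 0 π π') v = if π == π' then v else fun _ => vzero cv.
Proof. by rewrite /=; case: eqP => _; rewrite ?mxvec_mx1 ?mxvec_mx0. Qed.

Lemma mxvec_MpowS m (π π' : seq Γ) (v : 'I_n -> V) :
  mxvec cv (Mpow m.+1 π π') v =
  fun i => vs (fun ρ => mxvec cv (M π ρ) (mxvec cv (Mpow m ρ π') v) i).
Proof.
apply/funext => i; rewrite [LHS]/mxvec /= (eq_vsum cv (fun k => vsum_actr cv _ _)).
by rewrite exchange_vsum; apply: eq_vsum => ρ; rewrite -mxvec_mul.
Qed.

Lemma mxvec_Mstar (π π' : seq Γ) (v : 'I_n -> V) :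
  mxvec cv (Mstar cs M π π') v = fun i => vs (fun m => mxvec cv (Mpow m π π') v i).
Proof.
apply/funext => i.
by rewrite /mxvec (eq_vsum cv (fun k => vsum_actr cv _ _)) exchange_vsum.
Qed.

Lemma mxvec_A_M (p p' : Γ) (v : 'I_n -> V) i :
  mxvec cv (A_M cs M p p') v i =
  vs (fun x : {x : seq Γ * nat | (x.2 < size x.1) && (nth p x.1 x.2 == p')} =>
        mxvec cv (M [:: p] (sval x).1)
          (foldr (mxvec cv) v
             (map (fun q => Mstar cs M [:: q] [::]) (take (sval x).2 (sval x).1))) i).
Proof.
rewrite [LHS]/mxvec /A_M (eq_vsum cv (fun k => vsum_actr cv _ _)) exchange_vsum.
by apply: eq_vsum => x; rewrite -mxvec_foldl.
Qed.

Hypothesis HM : pushdown_transition cs M.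

Lemma M_nil (π : seq Γ) i j : M [::] π i j = szero cs.
Proof. by case: HM => _ [_ HM0]; apply: HM0 => -[p [π1 [π2 []]]]. Qed.

Lemma M_cons (p : Γ) (π0 ρ : seq Γ) : M (p :: π0) (ρ ++ π0) = M [:: p] ρ.
Proof. by case: HM => _ [HMp _]. Qed.

Lemma M_cons_eq0 (p : Γ) (π0 π' : seq Γ) i j :
  ~~ suffix π0 π' -> M (p :: π0) π' i j = szero cs.
Proof.
move=> nsuf; case: HM => _ [_ HM0]; apply: HM0 => -[p' [ρ [π1 [[_ <-] e]]]].
by move: nsuf; rewrite e suffix_suffix.
Qed.

Lemma M_cat (σ π π1 : seq Γ) : π != [::] -> M (π ++ σ) (π1 ++ σ) = M π π1.
Proof.
case: π => // p π0 _ /=; have [/suffixP [ρ ->]|nsuf] := boolP (suffix π0 π1).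
  by rewrite -catA !M_cons.
apply/funext => i; apply/funext => j; rewrite !M_cons_eq0 //.
by rewrite suffix_catl // eqxx.
Qed.

Lemma M_not_suffix (σ π π' : seq Γ) i j :
  π != [::] -> ~~ suffix σ π' -> M (π ++ σ) π' i j = szero cs.
Proof.
case: π => // p π0 _ nsuf; apply: M_cons_eq0.
by apply: contra nsuf; apply: catl_suffix.
Qed.

Lemma mxvec_Mpow_nil m (π : seq Γ) (v : 'I_n -> V) :
  mxvec cv (Mpow m.+1 [::] π) v = fun _ => vzero cv.
Proof.
rewrite mxvec_MpowS; apply/funext => i.
by apply: vsum_eq0 => ρ; apply: vsum_eq0 => k; rewrite M_nil act0l.
Qed.

End Pushdown.

Section StackHeight.
Variable (Γ : Type).
Implicit Types (σ : seq Γ) (ps : nat -> seq Γ).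

Definition stays_above σ ps : Prop := forall t, size σ < size (ps t).

Definition first_drop σ m ps : Prop :=
  (forall t, t < m -> size σ < size (ps t)) /\ size (ps m) <= size σ.

Lemma first_drop0_scons σ π' ps :
  first_drop σ 0 (scons π' ps) <-> size π' <= size σ.
Proof. by split=> [[]|]. Qed.

Lemma first_dropS_scons σ m π' ps :
  first_drop σ m.+1 (scons π' ps) <-> size σ < size π' /\ first_drop σ m ps.
Proof.
split=> [[above drop]|[above' [above drop]]].
  by split; [exact: (above 0) | split=> // t /(above t.+1)].
by split=> // -[|t] //= /above.
Qed.

Lemma not_stays_above σ ps : ~ stays_above σ ps <-> exists m, first_drop σ m ps.
Proof.
split=> [not_above|[m [_ drop]] above]; last by move: (above m); rewrite ltnNge drop.
have ex_drop : exists t, size (ps t) <= size σ.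
  apply: contra_notP not_above => no_drop t.
  by rewrite ltnNge; apply/negP => ?; apply: no_drop; exists t.
case: (@ex_minnP (fun t => size (ps t) <= size σ) ex_drop) => m drop m_min.
exists m; split=> // t lt_tm.
by rewrite ltnNge; apply/negP => /m_min; rewrite leqNgt lt_tm.
Qed.

Lemma first_drop_inj σ ps m m' : first_drop σ m ps -> first_drop σ m' ps -> m = m'.
Proof.
move=> [above drop] [above' drop']; case: (ltngtP m m') => // lt.
  by move: (above' m lt); rewrite ltnNge drop.
by move: (above m' lt); rewrite ltnNge drop'.
Qed.

End StackHeight.

Section Paths.
Variables (S : Type) (cs : CSemiring S) (V : Type) (cv : CSemimodule cs V).
Variables (n : nat) (Γ : finType) (M : seq Γ -> seq Γ -> mx S n) (l : nat).
Hypothesis HM : pushdown_transition cs M.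
Local Notation Mpow := (Mpow cs M).
Local Notation vs := (vsum cv).
Local Notation Φ := (Momega M cv l).
Local Notation path := ((nat -> seq Γ) * (nat -> 'I_n))%type.

(* [(x.1 t, x.2 t)] is the configuration reached after [t.+1] steps. *)
Definition step_weight (π : seq Γ) (i : 'I_n) (x : path) (t : nat) : S :=
  M (scons π x.1 t) (x.1 t) (scons i x.2 t) (x.2 t).

Definition path_weight (π : seq Γ) (i : 'I_n) (x : path) : V :=
  vmask cv (P_l l x.2) (iprod cv (step_weight π i x)).

Lemma Momega_path_weight π i : Φ π i = vs (path_weight π i).
Proof.
rewrite [RHS]vsum_prod; apply: eq_vsum => ps.
exact: (vsum_sig cv (fun js => P_l l js)
                 (fun js => iprod cv (step_weight π i (ps, js)))).
Qed.

Lemma path_weight_eq0 π i (x : path) t :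
  step_weight π i x t = szero cs -> path_weight π i x = vzero cv.
Proof. by rewrite /path_weight => /(iprod_eq0 cv) ->; rewrite vmask0. Qed.

Lemma path_weight_scons π π' i k (x : path) :
  path_weight π i (scons π' x.1, scons k x.2) =
  act cv (M π π' i k) (path_weight π' k x).
Proof. by rewrite /path_weight (propext (P_l_scons _ _ _)) vmask_act iprod_shift. Qed.

Definition Momega_on (R : (nat -> seq Γ) -> Prop) (π : seq Γ) (i : 'I_n) : V :=
  vs (fun x => vmask cv (R x.1) (path_weight π i x)).

Lemma Momega_onT : Momega_on (fun _ => True) = Φ.
Proof.
apply/funext => π; apply/funext => i; rewrite Momega_path_weight.
by apply: eq_vsum => x; rewrite vmaskT.
Qed.

Lemma Momega_on_pred0 (R : (nat -> seq Γ) -> Prop) π :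
  (forall ps, ~ R ps) -> Momega_on R π = fun _ => vzero cv.
Proof. by move=> R0; apply/funext => i; apply: vsum_eq0 => x; rewrite vmaskF. Qed.

Lemma Momega_on_split (R Q : (nat -> seq Γ) -> Prop) π i :
  Momega_on R π i =
  vadd cv (Momega_on (fun ps => R ps /\ Q ps) π i)
          (Momega_on (fun ps => R ps /\ ~ Q ps) π i).
Proof.
rewrite /Momega_on -(vsumD cv); apply: eq_vsum => x.
have [r|nr] := pselect (R x.1); last first.
  by rewrite !vmaskF ?vadd0 //; case.
rewrite vmaskT // {1}(vmask_split cv (Q x.1) (path_weight π i x)).
by congr vadd; congr vmask; apply/propext; tauto.
Qed.

Lemma Momega_on_partition (R : (nat -> seq Γ) -> Prop)
    (Rm : nat -> (nat -> seq Γ) -> Prop) π i :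
  (forall ps, R ps <-> exists m, Rm m ps) ->
  (forall ps m m', Rm m ps -> Rm m' ps -> m = m') ->
  Momega_on R π i = vs (fun m => Momega_on (Rm m) π i).
Proof.
move=> RE Rm_inj; rewrite /Momega_on exchange_vsum; apply: eq_vsum => x.
have [Rx|nr] := pselect (R x.1).
  have [m0 Rm0] := (RE _).1 Rx.
  rewrite vmaskT ?(vsum_supp1 (i0 := m0)) ?vmaskT // => m nm.
  by rewrite vmaskF // => /(Rm_inj _ _ _ Rm0) /esym.
rewrite (vmaskF _ _ nr); apply/esym/vsum_eq0 => m.
by rewrite vmaskF // => Rm_x; apply: nr; apply/RE; exists m.
Qed.

Lemma Momega_on_scons (R : (nat -> seq Γ) -> Prop)
    (R' : seq Γ -> (nat -> seq Γ) -> Prop) π i :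
  (forall π' ps, R (scons π' ps) <-> R' π' ps) ->
  Momega_on R π i = vs (fun π' => mxvec cv (M π π') (Momega_on (R' π') π') i).
Proof.
move=> RE.
have sconsK : bijective
    (fun y : (seq Γ * 'I_n) * path => (scons y.1.1 y.2.1, scons y.1.2 y.2.2)).
  exists (fun x => ((x.1 0, x.2 0), (stail x.1, stail x.2))).
    by move=> [[π' k] [ps js]].
  by case=> ps js /=; rewrite !scons_tail.
rewrite /Momega_on (reindex_vsum cv _ sconsK) vsum_prod vsum_prod; apply: eq_vsum => π'.
apply: eq_vsum => k; rewrite vsum_actl; apply: eq_vsum => x.
by rewrite /= (propext (RE _ _)) path_weight_scons vmask_act.
Qed.

Lemma Momega_scons π i : Φ π i = vs (fun π' => mxvec cv (M π π') (Φ π') i).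
Proof. by rewrite -Momega_onT (@Momega_on_scons _ (fun _ _ => True)). Qed.

Lemma Momega_nil : Φ [::] = fun _ => vzero cv.
Proof.
apply/funext => i; rewrite Momega_path_weight; apply: vsum_eq0 => x.
by apply: (path_weight_eq0 (t := 0)); rewrite /step_weight (M_nil HM).
Qed.

Lemma Momega_on_first_drop σ m π i : π != [::] ->
  Momega_on (first_drop σ m) (π ++ σ) i = mxvec cv (Mpow m.+1 π [::]) (Φ σ) i.
Proof.
elim: m π i => [|m IH] π i nπ.
  rewrite (@Momega_on_scons _ (fun π' _ => size π' <= size σ)); last first.
    by move=> π' ps; apply: first_drop0_scons.
  rewrite (vsum_supp1 (i0 := σ)) => [|π' nσ]; last first.
    have [small|large] := leqP (size π') (size σ); last first.
      by rewrite Momega_on_pred0 ?mxvec_zero // => ps; rewrite leqNgt large.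
    apply: vsum_eq0 => k; rewrite (M_not_suffix HM) ?act0l //.
    apply/negP => /suffixP [ρ eπ']; apply: nσ; move: small.
    by rewrite eπ' size_cat -{2}[size σ]add0n leq_add2r leqn0 size_eq0 => /eqP ->.
  have -> : Momega_on (fun _ => size σ <= size σ) σ = Φ σ.
    by rewrite -Momega_onT; congr Momega_on; apply/funext => ps; apply/propext.
  rewrite mxvec_MpowS (vsum_supp1 (i0 := [::])) ?mxvec_Mpow0 ?eqxx => [|ρ /eqP nρ].
    by rewrite -(M_cat HM σ [::] nπ).
  by rewrite mxvec_Mpow0 (negbTE nρ) mxvec_zero.
rewrite (@Momega_on_scons _ (fun π' ps => size σ < size π' /\ first_drop σ m ps));
  last first.
  by move=> π' ps; apply: first_dropS_scons.
rewrite (reindex_vsum_inj (h := cat^~ σ)) => [||π' not_cat].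
- rewrite mxvec_MpowS; apply: eq_vsum => ρ; rewrite (M_cat HM) //.
  have [->|nρ] := eqVneq ρ [::].
    by rewrite (mxvec_Mpow_nil cv HM) /= Momega_on_pred0 // => ps [] /=; rewrite ltnn.
  congr (mxvec cv _ _ i); apply/funext => k; rewrite -IH //; congr Momega_on.
  apply/funext => ps; apply/propext; split => [[]//|drop]; split => //.
  by rewrite size_cat -[X in X < _]add0n ltn_add2r lt0n size_eq0.
- exact: catIs.
- apply: vsum_eq0 => k; rewrite (M_not_suffix HM) ?act0l //.
  by apply/negP => /suffixP [ρ eπ']; apply: (not_cat ρ); rewrite eπ'.
Qed.

Lemma path_weight_leave_suffix σ π i (x : path) t :
  π != [::] -> stays_above σ x.1 -> ~~ suffix σ (x.1 t) ->
  path_weight (π ++ σ) i x = vzero cv.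
Proof.
move=> nπ above nsuf.
case: (@ex_minnP (fun t => ~~ suffix σ (x.1 t)) (ex_intro _ t nsuf)) => t0 nsuf0 t0_min.
apply: (path_weight_eq0 (t := t0)); rewrite /step_weight.
have [ρ0 nρ0 ->] : exists2 ρ0, ρ0 != [::] & scons (π ++ σ) x.1 t0 = ρ0 ++ σ.
  case: t0 nsuf0 t0_min => [|t'] nsuf0 t0_min; first by exists π.
  have /suffixP [ρ0 e] : suffix σ (x.1 t') by apply: contraT => /t0_min; rewrite ltnn.
  by exists ρ0 => //; apply/eqP => ρ00; move: (above t'); rewrite e ρ00 ltnn.
exact: (M_not_suffix HM).
Qed.

Lemma path_weight_cat σ π i (x : path) : π != [::] -> (forall t, x.1 t != [::]) ->
  path_weight (π ++ σ) i (fun t => x.1 t ++ σ, x.2) = path_weight π i x.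
Proof.
move=> nπ ne; rewrite /path_weight; congr (vmask _ _ (iprod _ _)).
by apply/funext => -[|t]; rewrite /step_weight /= (M_cat HM).
Qed.

Lemma Momega_on_stays_above σ π i :
  π != [::] -> Momega_on (stays_above σ) (π ++ σ) i = Φ π i.
Proof.
move=> nπ; rewrite Momega_path_weight /Momega_on.
pose cat_path (x : path) : path := (fun t => x.1 t ++ σ, x.2).
rewrite (reindex_vsum_inj (h := cat_path)) => [||x not_cat].
- apply: eq_vsum => x.
  have [ne|/existsNP [t /negP /negPn /eqP xt]] := pselect (forall t, x.1 t != [::]).
    rewrite vmaskT ?path_weight_cat // => t /=.
    by rewrite size_cat -[X in X < _]add0n ltn_add2r lt0n size_eq0 ne.
  rewrite vmaskF => [|above]; last by move: (above t); rewrite /= xt ltnn.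
  by apply/esym/(path_weight_eq0 (t := t.+1)); rewrite /step_weight /= xt (M_nil HM).
- move=> [ps js] [ps' js'] /= [e ->]; congr pair; apply/funext => t.
  exact: (catIs (congr1 (fun f => f t) e)).
- have [above|] := pselect (stays_above σ x.1); last exact: vmaskF.
  rewrite vmaskT //; have [t nsuf] : exists t, ~~ suffix σ (x.1 t).
    apply: contrapT => all_suf.
    apply: (not_cat (fun t => take (size (x.1 t) - size σ) (x.1 t), x.2)).
    case: x {not_cat above} all_suf => ps js /= all_suf.
    rewrite /cat_path; congr pair; apply/funext => t /=.
    have /suffixP [ρ ->] : suffix σ (ps t).
      by apply/negPn/negP => nsuf; apply: all_suf; exists t.
    by rewrite size_cat addnK take_size_cat.
  exact: path_weight_leave_suffix above nsuf.
Qed.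

Lemma Momega_cat σ π i :
  π != [::] ->
  Φ (π ++ σ) i = vadd cv (Φ π i) (mxvec cv (Mstar cs M π [::]) (Φ σ) i).
Proof.
move=> nπ; rewrite -[in LHS]Momega_onT (Momega_on_split _ (stays_above σ)); congr vadd.
  rewrite -(Momega_on_stays_above σ) //; congr Momega_on.
  by apply/funext => ps; apply/propext; tauto.
rewrite (@Momega_on_partition _ (first_drop σ)) => [|ps|ps m m'].
- rewrite mxvec_Mstar /= [in RHS]vsum_nat mxvec_Mpow0 (negbTE nπ) /= vadd0.
  by apply: eq_vsum => m; apply: Momega_on_first_drop.
- by rewrite -not_stays_above; tauto.
- exact: first_drop_inj.
Qed.

(* For π = p_1 ... p_k and j < k, the summand
   M*_{p_1,ε} ... M*_{p_j,ε} (M^{ω,l})_{p_{j+1}} of (M^{ω,l})_π. *)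
Fixpoint Momega_part (π : seq Γ) (j : nat) : 'I_n -> V :=
  if π is q :: σ then
    if j is j'.+1 then mxvec cv (Mstar cs M [:: q] [::]) (Momega_part σ j')
    else Φ [:: q]
  else fun _ => vzero cv.

Lemma Momega_partE π : Φ π = fun i => vs (fun j => Momega_part π j i).
Proof.
apply/funext; elim: π => [|q σ IH] i; first by rewrite Momega_nil; apply/esym/vsum_eq0.
rewrite (Momega_cat σ (π := [:: q])) // vsum_nat /=; congr vadd.
by rewrite (funext IH) mxvec_vsum.
Qed.

Lemma Momega_part_eq0 π j : size π <= j -> Momega_part π j = fun _ => vzero cv.
Proof. by elim: π j => [|q σ IH] [|j] //= lt; rewrite IH // mxvec_zero. Qed.

Lemma Momega_part_foldr p π j : j < size π ->
  Momega_part π j =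
  foldr (mxvec cv) (Φ [:: nth p π j])
    (map (fun q => Mstar cs M [:: q] [::]) (take j π)).
Proof. by elim: π j => [|q σ IH] [|j] //= lt; rewrite IH. Qed.

Lemma Momega_fixpoint p i :
  Φ [:: p] i = vs (fun p' => mxvec cv (A_M cs M p p') (Φ [:: p']) i).
Proof.
pose F (x : seq Γ * nat) := mxvec cv (M [:: p] x.1) (Momega_part x.1 x.2) i.
have -> : Φ [:: p] i = vs F.
  rewrite Momega_scons vsum_prod; apply: eq_vsum => π.
  by rewrite Momega_partE mxvec_vsum.
pose occurs p' (x : seq Γ * nat) := (x.2 < size x.1) && (nth p x.1 x.2 == p').
rewrite [RHS](eq_vsum cv (g := fun p' => vs (fun x => vmask cv (occurs p' x) (F x))))
  => [|p'].
  rewrite exchange_vsum /occurs; apply: eq_vsum => x.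
  have [lt|ge] := ltnP x.2 (size x.1).
    rewrite (vsum_supp1 (i0 := nth p x.1 x.2)) ?vmaskT ?lt ?eqxx // => p' np'.
    by rewrite vmaskF // => /andP [_ /eqP /esym].
  rewrite vsum_eq0 => [|p']; last by rewrite vmaskF // ltnNge ge.
  by rewrite /F Momega_part_eq0 // mxvec_zero.
rewrite mxvec_A_M -vsum_sig; apply: eq_vsum => -[[π j] /= /andP [lt /eqP <-]].
by rewrite /F /= (Momega_part_foldr p).
Qed.

End Paths.

Theorem theorem6 (S : Type) (cs : CSemiring S) (V : Type) (cv : CSemimodule cs V)
  (n : nat) (hn : 0 < n) (Γ : finType) (M : seq Γ -> seq Γ -> mx S n) :
  pushdown_transition cs M ->
  forall (p : Γ) (l : nat), l <= n ->
  forall i : 'I_n,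
    Momega M cv l [:: p] i =
    vsum cv (fun p' : Γ => mxvec cv (A_M cs M p p') (Momega M cv l [:: p']) i).
Proof. by move=> HM p l _ i; apply: Momega_fixpoint. Qed.
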